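(* Let $G$ be a finite, connected, simple, bridgeless, triangle-free cubic graph, and let $\Lambda$ be a valid labeling of $\mathfrak{L}_2(G)$. Then the subgraph of $\mathfrak{L}_2(G)$ induced by the set of open edges $\{e : \lambda_e=1\}$ is a disjoint union of cycles.
   Context: For a simple graph $H$, $\mathcal{L}(H)$ denotes its line graph (vertices = edges of $H$, adjacent iff sharing an endpoint). Let $\mathcal{T}$ be the set of triangles of $\mathcal{L}(\mathcal{L}(G))$ of the form $\mathcal{L}(T)$ (the three edges of $T$) for $T$ a triangle of $\mathcal{L}(G)$. The reduced order two line graph $\mathfrak{L}_2(G)$ has the vertex set of $\mathcal{L}(\mathcal{L}(G))$ and the edges of $\mathcal{L}(\mathcal{L}(G))$ not lying in any triangle of $\mathcal{T}$. For each edge $e$ of $G$ (a vertex of $\mathcal{L}(G)$), the four edges of $\mathcal{L}(G)$ incident to $e$ are pairwise adjacent in $\mathcal{L}(\mathcal{L}(G))$; the reduced clique $\mathbb{X}_e$ is the subgraph of $\mathfrak{L}_2(G)$ on these four vertices with all edges of $\mathfrak{L}_2(G)$ between them (it is a 4-cycle). A labeling $\Lambda=(\lambda_f)$ assigns to each edge $f$ of $\mathfrak{L}_2(G)$ a label $\lambda_f\in\{0,1\}$ ($1$ = open, $0$ = closed); it is valid if for every reduced clique $\mathbb{X}$ and every vertex $v$ of $\mathbb{X}$ there are two edges $\langle v,w\rangle,\langle v,u\rangle$ of $\mathbb{X}$ with $\lambda_{\langle v,w\rangle}=1-\lambda_{\langle v,u\rangle}$. *)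

From mathcomp Require Import all_boot.
Set Implicit Arguments. Unset Strict Implicit. Unset Printing Implicit Defensive.

Section Graphs.
Variable T : finType.
Variable adj : rel T.

Definition simple_graph := symmetric adj /\ irreflexive adj.
Definition connected_graph := forall x y : T, connect adj x y.
Definition cubic := forall x : T, #|[set y | adj x y]| = 3.
Definition triangle_free := forall x y z : T, ~ [&& adj x y, adj y z & adj x z].
Definition bridgeless := forall x y : T, adj x y ->
  connect (fun a b => adj a b && ([set a; b] != [set x; y])) x y.

Definition Gedge (E : {set T}) : bool :=
  [exists x, exists y, adj x y && (E == [set x; y])].

(* line graph L(G): vertices = edges of G, adjacent iff sharing an endpoint *)
Definition L1adj (E F : {set T}) : bool :=
  [&& Gedge E, Gedge F, E != F & E :&: F != set0].
(* edges of L(G) = vertices of L(L(G)) *)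
Definition L1edge (X : {set {set T}}) : bool :=
  [exists E, exists F, L1adj E F && (X == [set E; F])].
Definition L2adj (X Y : {set {set T}}) : bool :=
  [&& L1edge X, L1edge Y, X != Y & X :&: Y != set0].

(* triangles of L(G), and their edges (= vertices of the triangle L(T) of L(L(G))) *)
Definition L1triangle (E1 E2 E3 : {set T}) : bool :=
  [&& L1adj E1 E2, L1adj E2 E3 & L1adj E1 E3].
Definition tri_edges (E1 E2 E3 : {set T}) : {set {set {set T}}} :=
  [set [set E1; E2]; [set E2; E3]; [set E1; E3]].

(* reduced order two line graph: edges of L(L(G)) not lying in any triangle L(T) *)
Definition redadj (X Y : {set {set T}}) : bool :=
  L2adj X Y &&
  ~~ [exists E1, exists E2, exists E3,
        [&& L1triangle E1 E2 E3, X \in tri_edges E1 E2 E3 & Y \in tri_edges E1 E2 E3]].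

(* vertex set of the reduced clique X_E: the edges of L(G) incident to E *)
Definition rclique (E : {set T}) : {set {set {set T}}} :=
  [set X | L1edge X && (E \in X)].

(* a labeling assigns a bit (true = open = 1, false = closed = 0) to each edge
   {V, W} of the reduced line graph; values off edges are irrelevant *)
Definition labeling := {set {set {set T}}} -> bool.

Definition valid_labeling (lam : labeling) : Prop :=
  forall E : {set T}, Gedge E ->
  forall V, V \in rclique E ->
  exists W, exists U,
    [/\ W \in rclique E, U \in rclique E, redadj V W, redadj V U &
        lam [set V; W] != lam [set V; U]].

Definition openadj (lam : labeling) (V W : {set {set T}}) : bool :=
  redadj V W && lam [set V; W].

End Graphs.

(* A simple graph (vertex type S, adjacency r) is a disjoint union of cycles:
   its vertices (those listed by 'vert') and edges are exactly those of a family
   of vertex-disjoint cycles (each of length >= 3). *)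
Definition cycle_edge (S : eqType) (s : seq S) (x y : S) : bool :=
  [&& x \in s, y \in s & (next s x == y) || (next s y == x)].

Definition disjoint_union_of_cycles (S : eqType) (vert : S -> Prop) (r : rel S) : Prop :=
  exists cs : seq (seq S),
    [/\ uniq (flatten cs),
        all (fun s => 3 <= size s) cs,
        (forall x, vert x <-> has (fun s => x \in s) cs) &
        (forall x y, r x y = has (fun s => cycle_edge s x y) cs)].

(* In the reduced clique X_E of an edge E = {w, o} of G, a vertex {E, F} with
   o in F is reduced-adjacent only to vertices {E, {w, t}} with t <> o a
   neighbour of w: an edge through o would span, together with E and F, a
   triangle of L(G).  By cubicity there are at most two of them, and a valid
   labeling makes one open and one closed, so {E, F} has exactly one open
   neighbour in X_E and exactly one in X_F.  Hence every vertex of the open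
   subgraph has degree 0 or 2, and such a graph is a disjoint union of cycles:
   by induction, either delete a triangle component, or suppress a vertex of
   degree 2 with non-adjacent neighbours and subdivide the resulting cycle. *)

From mathcomp Require Import all_boot.
Set Implicit Arguments. Unset Strict Implicit. Unset Printing Implicit Defensive.

Section CycleDecomposition.
Variable S : finType.
Implicit Types (r : rel S) (s q : seq S) (cs : seq (seq S)).

Definition cycle_decomposition r cs : Prop :=
  [/\ uniq (flatten cs), all (fun s => 3 <= size s) cs &
      forall x y, r x y = has (fun s => cycle_edge s x y) cs].

Lemma cycle_edge_next s x : x \in s -> cycle_edge s x (next s x).
Proof. by move=> xs; rewrite /cycle_edge mem_next xs eqxx. Qed.

Lemma cycle_edge_rot i s : uniq s -> cycle_edge (rot i s) =2 cycle_edge s.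
Proof. by move=> us x y; rewrite /cycle_edge !mem_rot !next_rot. Qed.

Lemma cycle_edge_rev s : uniq s -> cycle_edge (rev s) =2 cycle_edge s.
Proof.
move=> us x y; rewrite /cycle_edge !mem_rev !next_rev // orbC.
have prevE z w : (prev s z == w) = (next s w == z).
  by apply/eqP/eqP => [<-|<-]; rewrite ?next_prev ?prev_next.
by rewrite !prevE.
Qed.

Lemma cycle_decompositionP r cs x :
  cycle_decomposition r cs -> (exists y, r x y) <-> x \in flatten cs.
Proof.
case=> _ _ rE; split=> [[y] | /flattenP[s s_cs xs]].
  by rewrite rE => /hasP[s s_cs /and3P[xs _ _]]; apply/flattenP; exists s.
by exists (next s x); rewrite rE; apply/hasP; exists s; rewrite ?cycle_edge_next.
Qed.

Lemma cycle_decomposition_union_of_cycles r cs :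
  cycle_decomposition r cs -> disjoint_union_of_cycles (fun x => exists y, r x y) r.
Proof.
move=> D; have [U A rE] := D; exists cs; split=> // x.
apply: iff_trans (cycle_decompositionP x D) _.
by split=> [/flattenP[s] | /hasP[s]] s_cs xs; [apply/hasP | apply/flattenP]; exists s.
Qed.

Lemma eq_cycle_decomposition r1 r2 cs :
  r1 =2 r2 -> cycle_decomposition r1 cs -> cycle_decomposition r2 cs.
Proof. by move=> r12 [U A rE]; split=> // x y; rewrite -r12. Qed.

Lemma perm_cycle_decomposition r cs1 cs2 :
  perm_eq cs1 cs2 -> cycle_decomposition r cs1 -> cycle_decomposition r cs2.
Proof.
move=> eq_cs [U A rE]; split; first by rewrite -(perm_uniq (perm_flatten eq_cs)).
  by rewrite -(perm_all _ eq_cs).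
by move=> x y; rewrite -(perm_has _ eq_cs).
Qed.

Lemma cycle_decomposition_replace r s1 s2 cs :
  perm_eq s1 s2 -> cycle_edge s1 =2 cycle_edge s2 ->
  cycle_decomposition r (s1 :: cs) -> cycle_decomposition r (s2 :: cs).
Proof.
move=> eq_s ce12 [U A rE]; split=> /=.
- have eq_cat : perm_eq (s1 ++ flatten cs) (s2 ++ flatten cs) by rewrite perm_cat2r.
  by rewrite -(perm_uniq eq_cat).
- by rewrite -(perm_size eq_s).
- by move=> x y; rewrite -ce12 rE.
Qed.

Lemma cycle_decomposition_uniq r s cs : cycle_decomposition r (s :: cs) -> uniq s.
Proof. by case=> /= + _ _; rewrite cat_uniq => /and3P[]. Qed.

Lemma cycle_decomposition_edge_first r cs a b :
  cycle_decomposition r cs -> r a b ->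
  exists q cs', cycle_decomposition r ((a :: b :: q) :: cs').
Proof.
move=> D rab; have [_ A rE] := D.
move: rab; rewrite rE => /hasP[s s_cs ce_ab].
have {}D := perm_cycle_decomposition (perm_to_rem s_cs) D.
have us := cycle_decomposition_uniq D.
have size_s : 3 <= size s by apply: (allP A).
pose s1 := if next s a == b then s else rev s.
have [eq_s1 ce_s1 next_a] :
    [/\ perm_eq s s1, cycle_edge s =2 cycle_edge s1 & next s1 a = b].
  rewrite /s1; case: ifP => [/eqP // | /negbT nab]; split.
  - by rewrite perm_sym perm_rev.
  - by move=> x y; rewrite cycle_edge_rev.
  - move: ce_ab => /and3P[_ _]; rewrite (negbTE nab) /= => /eqP <-.
    by rewrite next_rev // prev_next.
have a_s1 : a \in s1 by rewrite -(perm_mem eq_s1); case/and3P: ce_ab.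
have [i [|b' q] rot_s1] := rot_to a_s1.
  by move: size_s; rewrite (perm_size eq_s1) -(size_rot i) rot_s1.
have us1 : uniq s1 by rewrite -(perm_uniq eq_s1).
have b'b : b' = b by rewrite -next_a -(next_rot i us1) rot_s1 /next /= eqxx.
exists q, (rem s cs); rewrite -b'b -rot_s1.
apply: cycle_decomposition_replace D.
  by rewrite perm_sym perm_rot perm_sym.
by move=> x y; rewrite cycle_edge_rot // ce_s1.
Qed.

Lemma cycle_decomposition_cons r s cs :
  cycle_decomposition r cs -> uniq s -> 3 <= size s -> {in s, forall x y, ~~ r x y} ->
  cycle_decomposition (fun x y => cycle_edge s x y || r x y) (s :: cs).
Proof.
move=> D us size_s s_isolated; have [U A rE] := D; split=> /=.
- rewrite cat_uniq us U andbT; apply/hasPn => x /(cycle_decompositionP x D)[y rxy].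
  by apply: contraL rxy => /s_isolated ->.
- by rewrite size_s.
- by move=> x y; rewrite rE.
Qed.

Definition upair_eq (u w x y : S) := ((x == u) && (y == w)) || ((x == w) && (y == u)).

Lemma upair_eq_sym u w x y : upair_eq u w x y = upair_eq u w y x.
Proof. by rewrite /upair_eq orbC !(andbC (x == _)). Qed.

Lemma cycle_edgeE s x y :
  cycle_edge s x y = (x \in s) && (next s x == y) || (y \in s) && (next s y == x).
Proof.
rewrite /cycle_edge; apply/idP/idP => [/and3P[xs ys /orP[]->] | /orP[]/andP[zs /eqP<-]];
  by rewrite ?xs ?ys ?orbT ?mem_next ?zs ?eqxx ?orbT.
Qed.

(* For q = [::] the edge {b, a} of the 2-cycle would survive the subdivision. *)
Lemma cycle_edge_subdivide a b v q : uniq (a :: b :: q) -> q != [::] ->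
  v \notin a :: b :: q ->
  cycle_edge (a :: v :: b :: q) =2 (fun x y =>
    (cycle_edge (a :: b :: q) x y && ~~ upair_eq a b x y) ||
    upair_eq v a x y || upair_eq v b x y).
Proof.
move=> us q0 vs x y.
have [va vb] : v != a /\ v != b by move: vs; rewrite !inE !negb_or => /and3P[].
have ab : a != b by move: us; rewrite /= inE negb_or => /andP[/andP[]].
have next_b : next (a :: b :: q) b != a.
  case: q q0 us {vs} => // c q' _ /=; rewrite !inE !negb_or => /andP[/and3P[_ ac _] _].
  by rewrite /next /= (eq_sym b a) (negbTE ab) eqxx eq_sym.
set s := a :: b :: q in us vs next_b *.
have no_ba z w : (z \in s) && (next s z == w) -> ~~ ((z == b) && (w == a)).
  by apply: contraTN => /andP[/eqP-> /eqP->]; rewrite negb_and next_b orbT.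
have step z w : (z \in a :: v :: b :: q) && (next (a :: v :: b :: q) z == w) =
    ((z \in s) && (next s z == w) && ~~ ((z == a) && (w == b))) ||
    ((z == a) && (w == v)) || ((z == v) && (w == b)).
  have [->|za] := eqVneq z a.
    rewrite /next /= !eqxx !inE eqxx /= (eq_sym w b) andbN (eq_sym a v) (negbTE va).
    by rewrite andFb orbF eq_sym.
  have [->|zv] := eqVneq z v.
    by rewrite /next /= eqxx (negbTE va) (negbTE vs) !inE eqxx orbT eq_sym.
  by rewrite /next /= (negbTE za) (negbTE zv) !inE (negbTE za) (negbTE zv) /= andbT !orbF.
rewrite !cycle_edgeE !step /upair_eq.
move: (no_ba x y) (no_ba y x) => /implyP + /implyP.
by case: ((x \in s) && _) ((y \in s) && _) (x == a) (y == b) (x == b) (y == a)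
  (x == v) (y == v); do 7!case.
Qed.

Lemma cycle_decomposition_subdivide r a b v q cs :
  cycle_decomposition r ((a :: b :: q) :: cs) -> v \notin flatten ((a :: b :: q) :: cs) ->
  cycle_decomposition (fun x y =>
      (r x y && ~~ upair_eq a b x y) || upair_eq v a x y || upair_eq v b x y)
    ((a :: v :: b :: q) :: cs).
Proof.
move=> D vD; have [U A rE] := D; have us := cycle_decomposition_uniq D.
have q0 : q != [::] by case: q A {D U rE us vD}.
have vs : v \notin a :: b :: q by apply: contra vD; rewrite /= -2!cat_cons mem_cat => ->.
split.
- have eq_v : perm_eq (flatten ((a :: v :: b :: q) :: cs)) (v :: flatten ((a :: b :: q) :: cs)).
    by rewrite /= (perm_catCA [:: a] [:: v]).
  by rewrite (perm_uniq eq_v) cons_uniq vD U.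
- by case/andP: A.
move=> x y; rewrite rE /= cycle_edge_subdivide //.
have ab_cs : has (fun c => cycle_edge c x y) cs -> ~~ upair_eq a b x y.
  move=> /hasP[c c_cs /and3P[xc _ _]]; have x_cs : x \in flatten cs by apply/flattenP; exists c.
  move: (U : uniq ((a :: b :: q) ++ flatten cs)); rewrite cat_uniq => /and3P[_ s_new _].
  apply: contra s_new => x_s; apply/hasP; exists x => //.
  by move: x_s => /orP[] /andP[/eqP-> _]; rewrite !inE eqxx ?orbT.
move: ab_cs => /implyP.
by case: (has _ cs) (upair_eq a b x y) (cycle_edge _ x y) (upair_eq v a x y)
  (upair_eq v b x y); do 4!case.
Qed.

Definition nonisolated r := [set x | [exists y, r x y]].

Definition nonisolated_deg2 r := forall x y, r x y -> #|[set z | r x z]| = 2.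

Lemma nonisolated_proper r r' v :
  (forall x y, r' x y -> exists z, r x z) -> r' v =1 xpred0 -> (exists z, r v z) ->
  nonisolated r' \proper nonisolated r.
Proof.
move=> r'_r r'v [z rvz]; apply/properP; split.
  apply/subsetP => x; rewrite !inE => /existsP[y /r'_r[z' rxz']].
  by apply/existsP; exists z'.
by exists v; rewrite !inE; [apply/existsP; exists z | apply/existsPn => y; rewrite r'v].
Qed.

Lemma deg2_nbrs r x c d : nonisolated_deg2 r ->
  r x c -> r x d -> c != d -> r x =1 pred2 c d.
Proof.
move=> r_deg rc rd cd y.
have sub : [set c; d] \subset [set z | r x z].
  by apply/subsetP => z; rewrite !inE => /orP[]/eqP->.
have /eqP/setP/(_ y) : [set c; d] == [set z | r x z].
  by rewrite eqEcard sub cards2 cd (r_deg _ _ rc).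
by rewrite !inE.
Qed.

Lemma deg2_other_nbr r x v : nonisolated_deg2 r -> r x v ->
  exists2 c, c != v & r x =1 pred2 v c.
Proof.
move=> r_deg rv; have /cards2P[c [d [cd /setP Nx]]] : #|[set z | r x z]| == 2.
  by rewrite (r_deg _ _ rv).
have rxE z : r x z = pred2 c d z by have := Nx z; rewrite !inE.
move: rv; rewrite rxE => /orP[]/eqP vE; [exists d | exists c]; rewrite ?vE // 1?eq_sym //.
by move=> z; rewrite rxE /= orbC.
Qed.

Section Reductions.

Variables (r : rel S) (v a b : S).
Hypotheses (r_sym : symmetric r) (r_irr : irreflexive r) (r_deg : nonisolated_deg2 r).
Hypotheses (ab : a != b) (rvE : r v =1 pred2 a b).

Let rva : r v a. Proof. by rewrite rvE /= eqxx. Qed.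
Let rvb : r v b. Proof. by rewrite rvE /= eqxx orbT. Qed.
Let va : v != a. Proof. by apply: contraTneq rva => ->; rewrite r_irr. Qed.
Let vb : v != b. Proof. by apply: contraTneq rvb => ->; rewrite r_irr. Qed.

Definition delete_triangle x y := r x y && (x \notin [:: v; a; b]).

Section Triangle.

Hypothesis rab : r a b.

Lemma delete_triangleE :
  r =2 (fun x y => cycle_edge [:: v; a; b] x y || delete_triangle x y).
Proof.
have raE : r a =1 pred2 v b by apply: deg2_nbrs; rewrite // r_sym.
have rbE : r b =1 pred2 v a by apply: deg2_nbrs; rewrite // r_sym.
have [nva nvb nab] := And3 (negbTE va) (negbTE vb) (negbTE ab).
have [nav nbv nba] : [/\ (a == v) = false, (b == v) = false & (b == a) = false].
  by rewrite !(eq_sym _ v) (eq_sym b) nva nvb nab.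
have [nextv nexta nextb] : [/\ next [:: v; a; b] v = a, next [:: v; a; b] a = b
                             & next [:: v; a; b] b = v].
  by rewrite /next /= !eqxx nav nbv nba.
move=> x y; rewrite /delete_triangle; case: (boolP (x \in [:: v; a; b])) => xK; last first.
  by rewrite /cycle_edge (negbTE xK) /= andbT.
rewrite andbF orbF; move: xK; case: (boolP (y \in [:: v; a; b])) => [|yK].
  by rewrite !inE => /or3P[]/eqP-> /or3P[]/eqP->;
    rewrite ?rvE ?raE ?rbE /cycle_edge ?nextv ?nexta ?nextb !inE !eqxx
            ?nva ?nvb ?nab ?nav ?nbv ?nba.
move: (yK); rewrite !inE !negb_or => /and3P[yv ya yb] /or3P[]/eqP->;
  rewrite ?rvE ?raE ?rbE /cycle_edge (negbTE yK) andbF /=;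
  by rewrite ?(negbTE yv) ?(negbTE ya) ?(negbTE yb).
Qed.

Lemma delete_triangle_closed x y : r x y -> (x \in [:: v; a; b]) = (y \in [:: v; a; b]).
Proof.
have out z w : r z w -> z \in [:: v; a; b] -> w \in [:: v; a; b].
  by move=> + zK; rewrite delete_triangleE /delete_triangle zK andbF orbF => /and3P[].
by move=> rxy; apply/idP/idP; apply: out; rewrite // r_sym.
Qed.

Lemma delete_triangle_sym : symmetric delete_triangle.
Proof.
move=> x y; rewrite /delete_triangle r_sym; case: (boolP (r y x)) => //= ryx.
by rewrite (delete_triangle_closed ryx).
Qed.

Lemma delete_triangle_irr : irreflexive delete_triangle.
Proof. by move=> x; rewrite /delete_triangle r_irr. Qed.

Lemma delete_triangle_deg2 : nonisolated_deg2 delete_triangle.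
Proof.
move=> x y /andP[rxy xK]; rewrite -(r_deg rxy); apply: eq_card => z.
by rewrite !inE /delete_triangle xK andbT.
Qed.

Lemma delete_triangle_proper : nonisolated delete_triangle \proper nonisolated r.
Proof.
apply: (nonisolated_proper (v := v)) => [x y /andP[rxy _] | z | ]; first by exists y.
  by rewrite /delete_triangle inE eqxx andbF.
by exists a.
Qed.

Lemma delete_triangle_decomposition :
  (exists cs, cycle_decomposition delete_triangle cs) -> exists cs, cycle_decomposition r cs.
Proof.
case=> cs D; exists ([:: v; a; b] :: cs).
apply: eq_cycle_decomposition (cycle_decomposition_cons D _ _ _) => //.
- by move=> x y; rewrite delete_triangleE.
- by rewrite /= !inE negb_or va vb ab.
- by move=> x xK y; rewrite /delete_triangle xK andbF.
Qed.

End Triangle.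

Definition suppress x y := (r x y && (x != v) && (y != v)) || upair_eq a b x y.

Section Suppression.

Hypothesis nrab : ~~ r a b.

Lemma suppress_v : suppress v =1 xpred0.
Proof. by move=> z; rewrite /suppress eqxx andbF /upair_eq (negbTE va) (negbTE vb). Qed.

Lemma suppress_sym : symmetric suppress.
Proof. by move=> x y; rewrite /suppress r_sym upair_eq_sym andbAC. Qed.

Lemma suppress_irr : irreflexive suppress.
Proof.
move=> x; rewrite /suppress r_irr /upair_eq /=.
by apply/negbTE; apply: contra ab => /orP[] /andP[/eqP<- /eqP->].
Qed.

Lemma suppress_deg2 : nonisolated_deg2 suppress.
Proof.
have end_deg u w : r v u -> ~~ r u w ->
    suppress u =1 (fun z => (z == w) || (r u z && (z != v))) -> #|[set z | suppress u z]| = 2.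
  move=> rvu nruw suppress_u.
  have -> : [set z | suppress u z] = w |: ([set z | r u z] :\ v).
    by apply/setP => z; rewrite in_set suppress_u !inE andbC.
  have ruv : r u v by rewrite r_sym.
  rewrite cardsU1 !inE negb_and nruw orbT add1n.
  by have := cardsD1 v [set z | r u z]; rewrite (r_deg ruv) inE ruv add1n => -[<-].
move=> x y; case: (eqVneq x v) => [-> | xv]; first by rewrite suppress_v.
case: (eqVneq x a) => [-> _ | xa].
  apply: (end_deg _ b) => // z; rewrite /suppress /upair_eq eqxx (negbTE ab) orbF.
  by rewrite (eq_sym a v) va andbT orbC.
case: (eqVneq x b) => [-> _ | xb].
  apply: (end_deg _ a) => //; first by rewrite r_sym.
  move=> z; rewrite /suppress /upair_eq eqxx (eq_sym b a) (negbTE ab) /=.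
  by rewrite (eq_sym b v) vb andbT orbC.
have suppress_x : suppress x =1 r x.
  move=> z; rewrite /suppress /upair_eq (negbTE xa) (negbTE xb) xv /= !orbF andbT.
  by case: (eqVneq z v) => [->|_]; rewrite ?andbT // andbF r_sym rvE /= (negbTE xa) (negbTE xb).
rewrite suppress_x => rxy; rewrite -(r_deg rxy); apply: eq_card => z.
by rewrite !inE suppress_x.
Qed.

Lemma suppressE : r =2 (fun x y =>
  (suppress x y && ~~ upair_eq a b x y) || upair_eq v a x y || upair_eq v b x y).
Proof.
have nvv u : upair_eq a b v u = false by rewrite /upair_eq (negbTE va) (negbTE vb).
move=> x y; case: (eqVneq x v) => [-> | xv].
  by rewrite rvE /suppress nvv eqxx andbF /upair_eq eqxx (negbTE va) (negbTE vb) /= !orbF.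
case: (eqVneq y v) => [-> | yv].
  rewrite r_sym rvE /suppress upair_eq_sym nvv eqxx andbF /= /upair_eq eqxx.
  by rewrite (negbTE xv) !andbT.
have upair_v u : upair_eq v u x y = false by rewrite /upair_eq (negbTE xv) (negbTE yv) andbF.
rewrite /suppress !upair_v xv yv !andbT !orbF.
case: (boolP (upair_eq a b x y)) => [abxy | _]; last by rewrite orbF andbT.
rewrite orbT andbF; apply/negbTE.
by move: abxy => /orP[]/andP[/eqP-> /eqP->]; rewrite // r_sym.
Qed.

Lemma suppress_proper : nonisolated suppress \proper nonisolated r.
Proof.
apply: (nonisolated_proper (v := v)) _ suppress_v _; last by exists a.
move=> x y; rewrite /suppress => /orP[/andP[/andP[rxy _] _] | /orP[]/andP[/eqP-> _]].
- by exists y.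
- by exists v; rewrite r_sym.
- by exists v; rewrite r_sym.
Qed.

Lemma suppress_decomposition :
  (exists cs, cycle_decomposition suppress cs) -> exists cs, cycle_decomposition r cs.
Proof.
case=> cs D; have suppress_ab : suppress a b by rewrite /suppress /upair_eq !eqxx orbT.
have [q [cs' {}D]] := cycle_decomposition_edge_first D suppress_ab.
have vD : v \notin flatten ((a :: b :: q) :: cs').
  by apply/negP => /(cycle_decompositionP v D)[z]; rewrite suppress_v.
exists ((a :: v :: b :: q) :: cs').
by apply: eq_cycle_decomposition (cycle_decomposition_subdivide D vD) => x y; rewrite suppressE.
Qed.

End Suppression.

End Reductions.

Lemma nonisolated_deg2_cycle_decomposition r :
  symmetric r -> irreflexive r -> nonisolated_deg2 r -> exists cs, cycle_decomposition r cs.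
Proof.
have [n] := ubnP #|nonisolated r|; elim: n r => // n IHn r lt_r_n r_sym r_irr r_deg.
have IH r' : nonisolated r' \proper nonisolated r ->
    symmetric r' -> irreflexive r' -> nonisolated_deg2 r' -> exists cs, cycle_decomposition r' cs.
  by move=> /proper_card lt_r'; apply: IHn; apply: leq_trans lt_r' _; rewrite -ltnS.
have [r0 | [v]] := set_0Vmem (nonisolated r).
  exists [::]; split=> // x y; apply/negbTE/negP => rxy.
  by have := in_set0 x; rewrite -r0 inE; case/existsP; exists y.
rewrite inE => /existsP[a rva].
have [b ba rvE] := deg2_other_nbr r_deg rva.
have ab : a != b by rewrite eq_sym.
have {}rvE : r v =1 pred2 a b by move=> z; rewrite rvE /= orbC.
case: (boolP (r a b)) => [rab | nrab].
  apply: (delete_triangle_decomposition (v := v) (a := a) (b := b)) => //.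
  by apply: IH; [apply: delete_triangle_proper | apply: delete_triangle_sym |
                 apply: delete_triangle_irr | apply: delete_triangle_deg2].
apply: (suppress_decomposition (v := v) (a := a) (b := b)) => //.
by apply: IH; [apply: suppress_proper | apply: suppress_sym |
               apply: suppress_irr | apply: suppress_deg2].
Qed.

End CycleDecomposition.

Section ReducedLineGraph.

Variables (T : finType) (adj : rel T).
Implicit Types (x y z : T) (E F G : {set T}) (V W : {set {set T}}).

Lemma L1adj_sym E F : L1adj adj E F = L1adj adj F E.
Proof. by rewrite /L1adj andbCA (eq_sym E) setIC. Qed.

Lemma L2adj_sym V W : L2adj adj V W = L2adj adj W V.
Proof. by rewrite /L2adj andbCA (eq_sym V) setIC. Qed.

Lemma redadj_sym : symmetric (redadj adj).
Proof.
move=> V W; rewrite /redadj L2adj_sym; congr (_ && ~~ _).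
apply: eq_existsb => E1; apply: eq_existsb => E2; apply: eq_existsb => E3.
by rewrite (andbC (V \in _)).
Qed.

Lemma redadj_irr : irreflexive (redadj adj).
Proof. by move=> V; rewrite /redadj /L2adj eqxx !andbF. Qed.

Lemma openadj_sym (lam : labeling T) : symmetric (openadj adj lam).
Proof. by move=> V W; rewrite /openadj redadj_sym setUC. Qed.

Lemma openadj_irr (lam : labeling T) : irreflexive (openadj adj lam).
Proof. by move=> V; rewrite /openadj redadj_irr. Qed.

Lemma L1edgeP V : L1edge adj V -> exists E F, L1adj adj E F /\ V = [set E; F].
Proof. by case/existsP=> E /existsP[F /andP[EF /eqP->]]; exists E, F. Qed.

Lemma rcliqueP E V : V \in rclique adj E -> exists2 F, L1adj adj E F & V = [set E; F].
Proof.
rewrite inE => /andP[/L1edgeP[E1 [E2 [E12 ->]]]]; rewrite !inE => /orP[]/eqP->.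
  by exists E2.
by exists E1; rewrite 1?L1adj_sym // setUC.
Qed.

Lemma L2adj_rclique E F W :
  L2adj adj [set E; F] W -> W \in rclique adj E :|: rclique adj F.
Proof.
case/and4P=> _ W_L1 _ /set0Pn[G]; rewrite !inE W_L1 => /andP[/orP[]/eqP-> GW].
  by rewrite GW.
by rewrite GW orbT.
Qed.

Hypothesis adj_simple : simple_graph adj.

Lemma Gedge_mem E x : Gedge adj E -> x \in E -> exists2 y, adj x y & E = [set x; y].
Proof.
case/existsP=> x1 /existsP[x2 /andP[adj12 /eqP->]]; rewrite !inE => /orP[]/eqP->.
  by exists x2.
by exists x1; rewrite 1?setUC // adj_simple.1.
Qed.

Lemma L1adj_split E F : L1adj adj E F ->
  exists w o, [/\ adj w o, E = [set w; o], w \notin F & o \in F].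
Proof.
case/and4P=> EE FE EF /set0Pn[o]; rewrite inE => /andP[oE oF].
have [w adj_ow E_ow] := Gedge_mem EE oE.
exists w, o; split; rewrite 1?adj_simple.1 1?setUC //.
apply: contra EF => wF; have [w' _ F_ow'] := Gedge_mem FE oF.
have ow : o != w by apply: contraTneq adj_ow => ->; rewrite adj_simple.2.
by move: wF; rewrite F_ow' E_ow !inE eq_sym (negbTE ow) => /eqP->.
Qed.

Lemma not_redadj_star E F G z : L1adj adj E F -> L1adj adj E G ->
  z \in E -> z \in F -> z \in G -> ~~ redadj adj [set E; F] [set E; G].
Proof.
move=> EF EG zE zF zG; have [<- | FG] := eqVneq F G; first by rewrite redadj_irr.
rewrite /redadj negb_and negbK; apply/orP; right.
apply/existsP; exists E; apply/existsP; exists F; apply/existsP; exists G.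
rewrite /L1triangle EF EG /tri_edges !inE !eqxx ?orbT !andbT /L1adj FG.
case/and4P: EF => _ -> _ _; case/and4P: EG => _ -> _ _.
by apply/set0Pn; exists z; rewrite inE zF zG.
Qed.

Hypothesis adj_cubic : cubic adj.

Lemma card_redadj_rclique E F : L1adj adj E F ->
  #|[set W in rclique adj E | redadj adj [set E; F] W]| <= 2.
Proof.
move=> EF; have [w [o [adj_wo E_wo wF oF]]] := L1adj_split EF.
have sub : [set W in rclique adj E | redadj adj [set E; F] W] \subset
           [set [set E; [set w; t]] | t in [set t | adj w t] :\ o].
  apply/subsetP => W; rewrite inE => /andP[/rcliqueP[G EG ->] red_W].
  have /set0Pn[z] : E :&: G != set0 by case/and4P: EG.
  rewrite inE E_wo !inE => /andP[/orP[]/eqP-> zG]; last first.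
    by move: red_W; rewrite (negbTE (not_redadj_star EF EG _ oF zG)) // E_wo !inE eqxx orbT.
  have [t adj_wt G_wt] : exists2 t, adj w t & G = [set w; t].
    by apply: Gedge_mem zG; case/and4P: EG.
  apply/imsetP; exists t; last by rewrite G_wt.
  rewrite !inE adj_wt andbT; case/and4P: EG => _ _ + _.
  by apply: contraNneq => to; rewrite E_wo G_wt to.
apply: leq_trans (subset_leq_card sub) _; apply: leq_trans (leq_imset_card _ _) _.
by have := cardsD1 o [set t | adj w t]; rewrite adj_cubic inE adj_wo add1n => -[<-].
Qed.

Variable lam : labeling T.
Hypothesis lam_valid : valid_labeling adj lam.

Lemma open_rclique_nbr E F : L1adj adj E F ->
  exists W0, [set W in rclique adj E | openadj adj lam [set E; F] W] = [set W0].
Proof.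
move=> EF; have EE : Gedge adj E by case/and4P: EF.
have V_E : [set E; F] \in rclique adj E.
  rewrite !inE eqxx andbT; apply/existsP; exists E; apply/existsP; exists F.
  by rewrite EF eqxx.
have [W1 [W2 [W1E W2E red1 red2 lam12]]] := lam_valid EE V_E.
wlog lam1 : W1 W2 W1E W2E red1 red2 lam12 / lam [set [set E; F]; W1].
  move=> gen; case: (boolP (lam [set [set E; F]; W1])) => l1; first exact: (gen W1 W2).
  apply: (gen W2 W1); rewrite 1?eq_sym //.
  by move: lam12 l1; case: (lam [set _; W1]) (lam [set _; W2]) => [] [].
exists W1; apply/setP => W; rewrite !inE.
apply/andP/eqP => [[WE /andP[redW lamW]] | ->]; last first.
  by rewrite /openadj red1 lam1; move: W1E; rewrite inE.
apply: contraTeq (card_redadj_rclique EF) => W_W1; rewrite -ltnNge.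
apply/card_gt2P; exists W, W1, W2; move: W1E W2E; rewrite !inE WE redW red1 red2 => -> ->.
by split=> //; split=> //; apply: contraNneq lam12 => ->; rewrite ?lam1 ?lamW.
Qed.

Lemma openadj_deg2 : nonisolated_deg2 (openadj adj lam).
Proof.
move=> V W0 /andP[/andP[/and4P[V_L1 _ _ _] _] _].
have [E [F [EF ->]]] := L1edgeP V_L1; have FE : L1adj adj F E by rewrite L1adj_sym.
have [WE openE] := open_rclique_nbr EF; have [WF openF] := open_rclique_nbr FE.
rewrite setUC in openF.
have open_nbr E' W1 : [set W in rclique adj E' | openadj adj lam [set E; F] W] = [set W1] ->
    forall W, (W \in rclique adj E') && openadj adj lam [set E; F] W = (W == W1).
  by move=> /setP openE' W; have := openE' W; rewrite in_set in_set1.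
have [WE_E open_WE] : WE \in rclique adj E /\ openadj adj lam [set E; F] WE.
  by apply/andP; rewrite (open_nbr _ _ openE).
have [WF_F open_WF] : WF \in rclique adj F /\ openadj adj lam [set E; F] WF.
  by apply/andP; rewrite (open_nbr _ _ openF).
have -> : [set W | openadj adj lam [set E; F] W] = [set WE; WF].
  apply/setP => W; rewrite !inE -(open_nbr _ _ openE) -(open_nbr _ _ openF).
  case: (boolP (openadj _ _ _ W)) => [openW | _]; last by rewrite !andbF.
  have /L2adj_rclique : L2adj adj [set E; F] W by case/andP: openW => /andP[].
  by rewrite inE !andbT => ->.
rewrite cards2; suff -> : WE != WF by [].
move: WF_F; apply: contraTneq => <-.
have [G EG WE_EG] := rcliqueP WE_E.
rewrite inE WE_EG !inE negb_and; apply/orP; right; apply/norP; split.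
  by apply: contraTneq EF => ->; rewrite /L1adj eqxx !andbF.
by apply: contraTneq open_WE => ->; rewrite WE_EG openadj_irr.
Qed.

End ReducedLineGraph.

Unset Implicit Arguments.

Theorem lemma2p4 (T : finType) (adj : rel T) (lam : labeling T) :
  simple_graph adj -> connected_graph adj -> bridgeless adj ->
  triangle_free adj -> cubic adj ->
  valid_labeling adj lam ->
  disjoint_union_of_cycles
    (fun V => exists W, openadj adj lam V W) (openadj adj lam).
Proof.
move=> adj_simple _ _ _ adj_cubic lam_valid.
have [cs decomp] := nonisolated_deg2_cycle_decomposition (openadj_sym adj lam)
  (openadj_irr adj lam) (openadj_deg2 adj_simple adj_cubic lam_valid).
exact: cycle_decomposition_union_of_cycles decomp.
Qed.
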